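(* Let $P$ be a finite poset and $q$ a positive integer such that every chain of $P$ has at most $q$ elements. Then $\Gamma(P,q)$ is the poset with elements $\{(p,k): p\in P,\ 1+\delta(p)\le k\le q-\nu(p)-1\}$ whose covering relations are $(p_1,k_1)\lessdot(p_2,k_2)$ if and only if either (1) $p_1=p_2$ and $k_1=k_2+1$, or (2) $p_1\lessdot p_2$ in $P$ and $k_1+1=k_2$.
   Context: For $p\in P$, $\delta(p)$ (resp. $\nu(p)$) is the number of elements less (resp. greater) than $p$ in a chain of maximum size containing $p$. $\Gamma(P,q)$ is defined as $\Gamma(P,R)$ for the restriction function $R(p)=\{k\in\mathbb{Z}:1+\delta(p)\le k\le q-\nu(p)\}$. For a restriction function $R$ (each $R(p)$ nonempty finite subset of $\mathbb{Z}$), let $R(p)^*=R(p)\setminus\{\max R(p)\}$, $R(p)_{>k}$ (resp. $R(p)_{<k}$) the smallest (resp. largest) element of $R(p)$ greater (resp. less) than $k$. $\Gamma(P,R)$ is the poset on $\{(p,k):p\in P,k\in R(p)^*\}$ whose order is the reflexive–transitive closure of the relation $(p_1,k_1)\lessdot(p_2,k_2)$ (its covering relations), holding iff either (i) $p_1=p_2$ and $R(p_1)_{>k_2}=k_1$; or (ii) $p_1\lessdot p_2$ in $P$, $k_1=R(p_1)_{<k_2}$, $k_1\ne\max R(p_1)$, and no $k\in R(p_2)$ with $k>k_2$ has $R(p_1)_{<k}=k_1$. *)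

From HB Require Import structures.
From mathcomp Require Import all_boot all_order all_algebra.
From Stdlib Require Import Relations.
Set Implicit Arguments. Unset Strict Implicit. Unset Printing Implicit Defensive.
Import Order.TTheory GRing.Theory Num.Theory.

Local Open Scope order_scope.

Section PosetDefs.
Context {disp : Order.disp_t} {P : finPOrderType disp}.

Definition is_chain (C : {set P}) : bool :=
  [forall x in C, forall y in C, x >=< y].

Definition covers (a b : P) : bool := (a < b) && [forall z : P, ~~ ((a < z) && (z < b))].

Definition maxchain (p : P) : {set P} :=
  fintype.arg_max [set p] (fun C : {set P} => is_chain C && (p \in C)) (fun C => #|C|).

Definition delta (p : P) : nat := #|[set x in maxchain p | x < p]|.
Definition nu (p : P) : nat := #|[set x in maxchain p | p < x]|.

End PosetDefs.

Local Open Scope ring_scope.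

(* A restriction function R : P -> seq int, R p viewed as a finite set of integers. *)
Definition smax (s : seq int) : int := foldr Num.max (head 0 s) s.

Definition is_succ_in (s : seq int) (k k' : int) : bool :=
  [&& k' \in s, k < k' & all (fun j => ~~ ((k < j) && (j < k'))) s].
Definition is_pred_in (s : seq int) (k k' : int) : bool :=
  [&& k' \in s, k' < k & all (fun j => ~~ ((k' < j) && (j < k))) s].

Section Gamma.
Context {disp : Order.disp_t} {P : finPOrderType disp}.
Variable R : P -> seq int.

Definition gamma_elem (x : P * int) : bool :=
  (x.2 \in R x.1) && (x.2 != smax (R x.1)).

Definition gamma_gen (x y : P * int) : Prop :=
  let: (p1, k1) := x in let: (p2, k2) := y in
  gamma_elem x /\ gamma_elem y /\
  ( (p1 = p2 /\ is_succ_in (R p1) k2 k1)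
  \/ (covers p1 p2 /\ is_pred_in (R p1) k2 k1 /\ k1 != smax (R p1) /\
      (forall k, k \in R p2 -> k2 < k -> ~~ is_pred_in (R p1) k k1)) ).

Definition gamma_le (x y : P * int) : Prop := clos_refl_trans _ gamma_gen x y.

Definition gamma_covers (x y : P * int) : Prop :=
  [/\ gamma_elem x, gamma_elem y, x <> y, gamma_le x y &
      forall z, gamma_elem z -> gamma_le x z -> gamma_le z y -> z = x \/ z = y].

End Gamma.

(* the restriction function R(p) = {k in Z : 1 + delta p <= k <= q - nu p}
   (all such k are >= 1, so enumerating 0..q suffices) *)
Definition Rq {disp : Order.disp_t} {P : finPOrderType disp} (q : nat) (p : P)
  : seq int :=
  [seq (Posz k) | k <- iota 0 q.+1 &
     ((1 + (delta p)%:Z <= Posz k) && (Posz k <= q%:Z - (nu p)%:Z))].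

(* In Γ(P,q) every R(p) is an integer interval, so R(p)_{>k} = k + 1 and
   R(p)_{<k} = k - 1, and the last clause of a type (ii) generator becomes
   vacuous: the generators are exactly the two kinds of steps of the statement.
   They are also the covering relations, because along any chain of generators
   the P-coordinate weakly increases, the integer coordinate decreases while the
   P-coordinate stays put, and it can grow by at most one across a covering
   p1 ⋖ p2 of P. *)
From HB Require Import structures.
From mathcomp Require Import all_boot all_order all_algebra.
From mathcomp Require Import zify.
From Stdlib Require Import Relations.
Import Order.TTheory GRing.Theory Num.Theory.
Local Open Scope ring_scope.

Lemma clos_rt_mono {A : Type} {r s : relation A} :
  inclusion A r s -> inclusion A (clos_refl_trans A r) (clos_refl_trans A s).
Proof.
move=> rs x y; elim=> [u v /rs|u|u v w _ ruv _ rvw]; first exact: rt_step.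
  exact: rt_refl.
exact: rt_trans ruv rvw.
Qed.

Lemma foldr_max_ge (d : int) s j : j \in s -> j <= foldr Num.max d s.
Proof.
elim: s => //= a s IHs; rewrite in_cons le_max => /orP[/eqP->|/IHs->].
  by rewrite lexx.
by rewrite orbT.
Qed.

Lemma foldr_max_mem (d : int) s : foldr Num.max d s \in d :: s.
Proof.
elim: s => [|a s IHs] /=; first by rewrite mem_seq1.
case: (lerP a (foldr Num.max d s)) => _; last by rewrite !inE eqxx orbT.
by move: IHs; rewrite !inE => /orP[->|->]; rewrite ?orbT.
Qed.

Lemma smax_ge s j : j \in s -> j <= smax s.
Proof. exact: foldr_max_ge. Qed.

Lemma smax_mem s : s != [::] -> smax s \in s.
Proof.
case: s => // a s _; have := foldr_max_mem a (a :: s).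
by rewrite /smax /= in_cons => /orP[/eqP->|//]; rewrite mem_head.
Qed.

Lemma is_succ_inE (s : seq int) k k' :
  k + 1 \in s -> is_succ_in s k k' = (k' == k + 1).
Proof.
move=> sk1; apply/and3P/eqP => [[_ ltkk' /allP no_between]|->].
  by have := no_between _ sk1; apply: contraNeq => ?; apply/andP; lia.
by split=> //; [lia | apply/allP => j _; apply/andP; lia].
Qed.

Lemma is_pred_inE (s : seq int) k k' :
  k' \in s -> k' + 1 \in s -> is_pred_in s k k' = (k == k' + 1).
Proof.
move=> sk' sk'1; apply/and3P/eqP => [[_ ltk'k /allP no_between]|->].
  by have := no_between _ sk'1; apply: contraNeq => ?; apply/andP; lia.
by split=> //; [lia | apply/allP => j _; apply/andP; lia].
Qed.

Section GammaSteps.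
Context {disp : Order.disp_t} {P : finPOrderType disp}.

Definition gamma_step (x y : P * int) : Prop :=
  (x.1 = y.1 /\ x.2 = y.2 + 1) \/ (covers x.1 y.1 /\ x.2 + 1 = y.2).

Lemma covers_lt {a b : P} : covers a b -> (a < b)%O.
Proof. by case/andP. Qed.

Lemma covers_between {a b z : P} : covers a b -> (a < z)%O -> (z < b)%O -> False.
Proof. by case/andP=> _ /forallP/(_ z); rewrite negb_and => /orP[]/negP. Qed.

Lemma gamma_step_irrefl {x} : ~ gamma_step x x.
Proof. by case=> [[_]|[/covers_lt]]; [lia | rewrite ltxx]. Qed.

Notation steps := (clos_refl_trans_1n _ gamma_step).

Lemma steps_fst_le {x y} : steps x y -> (x.1 <= y.1)%O.
Proof.
elim=> [//|u v w [[-> _]|[/covers_lt/ltW uv _]] _ //]; exact: le_trans.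
Qed.

Lemma steps_snd_ge {x y} : steps x y -> x.1 = y.1 -> y.2 <= x.2.
Proof.
elim=> [//|u v w [[uv1 uv2]|[/covers_lt uv _]] vw IH] uw.
  by have := IH (etrans (esym uv1) uw); lia.
by have := lt_le_trans uv (steps_fst_le vw); rewrite uw ltxx.
Qed.

Lemma steps_covers_snd_le {x y} : steps x y -> covers x.1 y.1 -> y.2 <= x.2 + 1.
Proof.
elim=> [u /covers_lt|u v w [[uv1 uv2]|[uv uv2]] vw IH uw]; first by rewrite ltxx.
  by rewrite uv1 in uw; have := IH uw; lia.
move: (steps_fst_le vw); rewrite le_eqVlt => /orP[/eqP vw1|].
  by have := steps_snd_ge vw vw1; lia.
by move/(covers_between uw (covers_lt uv)).
Qed.

Lemma gamma_step_between x y z :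
  gamma_step x y -> steps x z -> steps z y -> z = x \/ z = y.
Proof.
case: x y z => [p1 k1] [p2 k2] [p k]; rewrite /gamma_step /=.
move=> [[<- ->]|[p12 <-]] xz zy.
  have /eqP pE : p == p1 by rewrite eq_le (steps_fst_le xz) (steps_fst_le zy).
  have := steps_snd_ge xz (esym pE); have := steps_snd_ge zy pE.
  rewrite pE /= => ? ?.
  have [->|->] : k = k2 + 1 \/ k = k2 by lia.
  - by left.
  - by right.
have := steps_fst_le xz; rewrite le_eqVlt => /orP[/eqP /= pE|lt1p].
  have := steps_snd_ge xz pE; have := steps_covers_snd_le zy.
  by rewrite /= -pE => /(_ p12) ? ?; left; congr (_, _); lia.
have := steps_fst_le zy; rewrite le_eqVlt => /orP[/eqP /= pE|/(covers_between p12 lt1p)//].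
have := steps_snd_ge zy pE; have := steps_covers_snd_le xz.
by rewrite /= pE => /(_ p12) ? ?; right; congr (_, _); lia.
Qed.

End GammaSteps.

Section IntervalRestriction.
Context {disp : Order.disp_t} {P : finPOrderType disp}.
Context {R : P -> seq int} {lo hi : P -> int}.
Hypothesis mem_R : forall p k, (k \in R p) = (lo p <= k <= hi p).

Lemma smax_interval {p k} : k \in R p -> smax (R p) = hi p.
Proof.
move=> Rk; have Rhi : hi p \in R p by move: Rk; rewrite !mem_R lexx; lia.
have : smax (R p) \in R p by apply: smax_mem; apply: contraTneq Rk => ->.
by rewrite mem_R => /andP[_ le_hi]; apply/le_anti; rewrite le_hi smax_ge.
Qed.

Lemma gamma_elemE x : gamma_elem R x = (lo x.1 <= x.2) && (x.2 <= hi x.1 - 1).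
Proof.
rewrite /gamma_elem; case Rx: (x.2 \in R x.1); last by move: Rx; rewrite mem_R; lia.
by rewrite (smax_interval Rx); move: Rx; rewrite mem_R; lia.
Qed.

Lemma gamma_elem_mem {p k} : gamma_elem R (p, k) -> (k \in R p) /\ (k + 1 \in R p).
Proof. by rewrite gamma_elemE !mem_R /=; lia. Qed.

Lemma gamma_genE x y :
  gamma_gen R x y <-> [/\ gamma_elem R x, gamma_elem R y & gamma_step x y].
Proof.
case: x y => [p1 k1] [p2 k2]; rewrite /gamma_gen /gamma_step /=.
split.
- move=> [ex [ey [[E succ]|[p12 [pred _]]]]]; split=> //.
  + subst p2; have [_ ?] := gamma_elem_mem ey.
    by left; split=> //; apply/eqP; rewrite -(is_succ_inE (R p1)).
  + have [? ?] := gamma_elem_mem ex.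
    by right; split=> //; apply/esym/eqP; rewrite -(is_pred_inE (R p1)).
- move=> [ex ey [[E E']|[p12 E]]]; subst.
  + have [_ ?] := gamma_elem_mem ey.
    by do 2!split=> //; left; rewrite is_succ_inE.
  + have [? ?] := gamma_elem_mem ex; do 2!split=> //; right.
    rewrite is_pred_inE // eqxx; do !split=> //; first by case/andP: ex.
    by move=> k _ gtk; rewrite is_pred_inE //; lia.
Qed.

Lemma gamma_coversE x y : gamma_covers R x y <-> gamma_gen R x y.
Proof.
have gen_step : inclusion _ (gamma_gen R) gamma_step by move=> a b /gamma_genE[].
have to_steps u v : gamma_le R u v -> clos_refl_trans_1n _ gamma_step u v.
  by move=> le_uv; exact: clos_rt_rt1n (clos_rt_mono gen_step _ _ le_uv).
split=> [[ex ey neq le_xy between]|xy].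
- have [xy|[w xw wy]] : x = y \/ exists2 w, gamma_gen R x w & gamma_le R w y.
    case: (clos_rt_rt1n _ _ _ _ le_xy) => [|w z xw wz]; first by left.
    by right; exists w => //; apply: clos_rt1n_rt.
  + by case: neq.
  + have [_ ew _] := proj1 (gamma_genE _ _) xw.
    case: (between w ew (rt_step _ _ _ _ xw) wy) => [wx|<- //].
    by rewrite wx in xw; case/gamma_genE: xw => _ _ /gamma_step_irrefl.
- have [ex ey step] := proj1 (gamma_genE _ _) xy.
  split=> //.
  + by move=> xyE; rewrite xyE in step; apply: gamma_step_irrefl step.
  + exact: rt_step.
  + by move=> z _ xz zy; apply: gamma_step_between step (to_steps _ _ xz) (to_steps _ _ zy).
Qed.

End IntervalRestriction.

Lemma mem_Rq {disp : Order.disp_t} {P : finPOrderType disp} (q : nat) (p : P) k :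
  (k \in Rq q p) = (1 + (delta p)%:Z <= k <= q%:Z - (nu p)%:Z).
Proof.
apply/mapP/idP => [[n]|]; first by rewrite mem_filter => /andP[? _] ->.
case: k => [n|n] bounds; last by lia.
by exists n => //; rewrite mem_filter bounds mem_iota /=; lia.
Qed.

Theorem corollary2p22 (disp : Order.disp_t) (P : finPOrderType disp) (q : nat) :
  (0 < q)%N ->
  (forall C : {set P}, is_chain C -> (#|C| <= q)%N) ->
  (forall x : P * int,
     gamma_elem (Rq q) x <->
     (1 + (delta x.1)%:Z <= x.2) && (x.2 <= q%:Z - (nu x.1)%:Z - 1)) /\
  (forall x y : P * int,
     gamma_covers (Rq q) x y <->
     [/\ (1 + (delta x.1)%:Z <= x.2) && (x.2 <= q%:Z - (nu x.1)%:Z - 1),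
         (1 + (delta y.1)%:Z <= y.2) && (y.2 <= q%:Z - (nu y.1)%:Z - 1) &
         ((x.1 = y.1 /\ x.2 = y.2 + 1) \/ (covers x.1 y.1 /\ x.2 + 1 = y.2))]).
Proof.
move=> _ _; have elemE := gamma_elemE (mem_Rq q).
split=> [x|x y]; first by rewrite elemE.
by rewrite (gamma_coversE (mem_Rq q)) (gamma_genE (mem_Rq q)) !elemE.
Qed.
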